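(* Let $M=\mathrm{Mon}\langle \Sigma \mid R\rangle$ be a finitely presented monoid and let $\mathfrak{R}$ be a rewriting system for $M$ that is complete and cyclically complete. Let $u,v\in\Sigma^*$. (i) If $u$ and $v$ are transposed, then $\rho(u)\simeq\rho(v)$. (ii) If $\rho(u)\simeq\rho(v)$, then $u\equiv_M v$.
   Context: $\Sigma^*$ is the free monoid on the alphabet $\Sigma$; $=_M$ is equality in $M$. A rewriting system $\mathfrak{R}$ is a set of rules $l\to r$ with $l,r\in\Sigma^*$; $plq\to prq$ is one rewriting step. $\mathfrak{R}$ is complete for $M$ if it is terminating, confluent, and the congruence it generates on $\Sigma^*$ is $=_M$. $u\simeq v$ means $u=ab$, $v=ba$ for some words $a,b$ (cyclic conjugates in $\Sigma^*$). $u\rightsquigarrow v$ means some cyclic conjugate $\tilde u$ of $u$ (possibly $u$) satisfies $\tilde u\to v$; $\rightsquigarrow^*$ is its reflexive–transitive closure. $\mathfrak{R}$ is cyclically terminating if there is no infinite sequence $u_1\rightsquigarrow u_2\rightsquigarrow\cdots$; cyclically confluent if whenever $w\rightsquigarrow^* u$ and $w\rightsquigarrow^* v$ there exist $z\simeq z'$ with $u\rightsquigarrow^* z$ and $v\rightsquigarrow^* z'$; cyclically complete if both. A word is cyclically irreducible if it and all its cyclic conjugates are irreducible modulo $\mathfrak{R}$. $\rho(u)$ denotes the cyclically irreducible form of $u$, i.e. a cyclically irreducible word $w$ with $u\rightsquigarrow^* w$ (unique up to $\simeq$ when $\mathfrak{R}$ is cyclically complete). Words $u,v$ are transposed if there exist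 $x,y\in\Sigma^*$ with $u=_M xy$ and $v=_M yx$. $u\equiv_M v$ means there exist $x,y\in\Sigma^*$ with $ux=_M xv$ and $yu=_M vy$. *)

From mathcomp Require Import all_boot.
From Stdlib Require Import Relations.Relation_Operators.
Set Implicit Arguments. Unset Strict Implicit. Unset Printing Implicit Defensive.

Section Rewriting.
Variable Sigma : finType.
Definition word := seq Sigma.

Definition rules := word -> word -> Prop.

Definition step (RS : rules) (x y : word) : Prop :=
  exists p q l r, RS l r /\ x = p ++ l ++ q /\ y = p ++ r ++ q.

Definition reach (RS : rules) := clos_refl_trans word (step RS).

Definition congr (RS : rules) := clos_refl_sym_trans word (step RS).

(* equality in M = Mon<Sigma | R>, R a finite list of relations *)
Definition eqM (R : seq (word * word)) : word -> word -> Prop :=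
  congr (fun l r => (l, r) \in R).

Definition terminating (RS : rules) : Prop :=
  ~ exists f : nat -> word, forall n, step RS (f n) (f n.+1).

Definition confluent (RS : rules) : Prop :=
  forall w u v, reach RS w u -> reach RS w v ->
    exists z, reach RS u z /\ reach RS v z.

Definition complete_for (R : seq (word * word)) (RS : rules) : Prop :=
  [/\ terminating RS, confluent RS & forall x y, congr RS x y <-> eqM R x y].

Definition cconj (u v : word) : Prop := exists a b, u = a ++ b /\ v = b ++ a.

Definition cstep (RS : rules) (u v : word) : Prop :=
  exists u', cconj u u' /\ step RS u' v.

Definition creach (RS : rules) := clos_refl_trans word (cstep RS).

Definition cyc_terminating (RS : rules) : Prop :=
  ~ exists f : nat -> word, forall n, cstep RS (f n) (f n.+1).

Definition cyc_confluent (RS : rules) : Prop :=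
  forall w u v, creach RS w u -> creach RS w v ->
    exists z z', [/\ cconj z z', creach RS u z & creach RS v z'].

Definition cyc_complete (RS : rules) : Prop :=
  cyc_terminating RS /\ cyc_confluent RS.

Definition irreducible (RS : rules) (w : word) : Prop := ~ exists v, step RS w v.

Definition cyc_irreducible (RS : rules) (w : word) : Prop :=
  forall w', cconj w w' -> irreducible RS w'.

(* w is a cyclically irreducible form rho(u) of u *)
Definition is_rho (RS : rules) (u w : word) : Prop :=
  creach RS u w /\ cyc_irreducible RS w.

Definition transposed (R : seq (word * word)) (u v : word) : Prop :=
  exists x y, eqM R u (x ++ y) /\ eqM R v (y ++ x).

Definition equivM (R : seq (word * word)) (u v : word) : Prop :=
  exists x y, eqM R (u ++ x) (x ++ v) /\ eqM R (y ++ u) (v ++ y).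

End Rewriting.

From mathcomp Require Import all_boot.
From Stdlib Require Import Relations.Relation_Operators Relations.Operators_Properties.
Set Implicit Arguments. Unset Strict Implicit. Unset Printing Implicit Defensive.

(* (i): a cyclically irreducible form is determined up to cyclic conjugation
   by any word from which it is reachable (cyclic confluence), so it is
   invariant along rewriting in both directions; it is also invariant under
   cyclic conjugation, because conjugate words have the same ~>-successors.
   Transposed words xy and yx are linked through these moves, since equality
   in M means having a common descendant (Church-Rosser).
   (ii): a step u = ab, ba -> w gives u ≡_M w (conjugate by a, then rewrite),
   and ≡_M is an equivalence relation, so u ≡ rho(u) ≡ rho(v) ≡ v. *)

Section CyclicRewriting.
Variable Sigma : finType.
Implicit Types (u v w a b x y : word Sigma) (RS : rules Sigma).

Lemma cconj_rot u v : cconj u v <-> exists n, v = rot n u.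
Proof.
split.
- by move=> [a [b [-> ->]]]; exists (size a); rewrite rot_size_cat.
- move=> [n ->]; exists (take n u), (drop n u).
  by rewrite cat_take_drop.
Qed.

Lemma cconj_refl u : cconj u u.
Proof. by exists [::], u; rewrite cats0. Qed.

Lemma cconj_sym u v : cconj u v -> cconj v u.
Proof. by move=> [a [b [-> ->]]]; exists b, a. Qed.

Lemma cconj_trans u v w : cconj u v -> cconj v w -> cconj u w.
Proof.
move=> /cconj_rot [n ->] /cconj_rot [m ->]; apply/cconj_rot.
by exists (rot_add u n m); rewrite rot_rot_add.
Qed.

Lemma cyc_irreducible_cconj RS a b :
  cyc_irreducible RS a -> cconj a b -> cyc_irreducible RS b.
Proof. by move=> irr_a ab w bw; apply: irr_a; apply: cconj_trans ab bw. Qed.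

Lemma creach_cyc_irreducible RS a w :
  cyc_irreducible RS a -> creach RS a w -> w = a.
Proof.
move=> irr_a /clos_rt_rt1n_iff aw; case: aw => // y z [a' [aa' st]] _.
by case: (irr_a a' aa'); exists y.
Qed.

Lemma reach_creach RS a b : reach RS a b -> creach RS a b.
Proof.
elim=> [x y st|x|x y z _ xy _ yz].
- by apply: rt_step; exists x; split; first exact: cconj_refl.
- exact: rt_refl.
- exact: rt_trans xy yz.
Qed.

Lemma cstep_cconj RS a b w : cconj a b -> cstep RS a w -> cstep RS b w.
Proof.
move=> ab [a' [aa' st]]; exists a'; split => //.
exact: cconj_trans (cconj_sym ab) aa'.
Qed.

Lemma creach_cconj RS a b w : cconj a b -> creach RS a w -> w = a \/ creach RS b w.
Proof.
move=> ab /clos_rt_rt1n_iff aw; case: aw => [|y z ay yz]; first by left.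
right; apply: (@rt_trans _ _ _ y); first exact/rt_step/(cstep_cconj ab ay).
exact/clos_rt_rt1n_iff.
Qed.

Lemma rho_creach RS w r a : cyc_confluent RS -> is_rho RS w r -> creach RS w a ->
  exists r', is_rho RS a r' /\ cconj r r'.
Proof.
move=> cc [wr irr_r] wa; have [z [z' [zz' rz az']]] := cc _ _ _ wr wa.
rewrite (creach_cyc_irreducible irr_r rz) in zz'.
by exists z'; split => //; split => //; apply: cyc_irreducible_cconj zz'.
Qed.

Lemma rho_creach_backward RS w a r : creach RS w a -> is_rho RS a r -> is_rho RS w r.
Proof. by move=> wa [ar irr_r]; split => //; apply: rt_trans wa ar. Qed.

Lemma rho_unique RS w r1 r2 : cyc_confluent RS ->
  is_rho RS w r1 -> is_rho RS w r2 -> cconj r1 r2.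
Proof.
move=> cc rho1 [wr2 irr2]; have [r' [[r2r' _] r1r']] := rho_creach cc rho1 wr2.
by rewrite (creach_cyc_irreducible irr2 r2r') in r1r'.
Qed.

Lemma rho_cconj RS a b ra : cconj a b -> is_rho RS a ra ->
  exists rb, is_rho RS b rb /\ cconj ra rb.
Proof.
move=> ab [ara irr_ra]; case: (creach_cconj ab ara) => [ra_a|bra].
- exists b; split; last by rewrite ra_a.
  split; first exact: rt_refl.
  by apply: cyc_irreducible_cconj ab; rewrite -ra_a.
- by exists ra; split; last exact: cconj_refl.
Qed.

Lemma church_rosser RS x y : confluent RS -> congr RS x y ->
  exists z, reach RS x z /\ reach RS y z.
Proof.
move=> cf; elim=> [a b st|a|a b _ [z [az bz]]|a b c _ [z1 [az1 bz1]] _ [z2 [bz2 cz2]]].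
- by exists b; split; [apply: rt_step|apply: rt_refl].
- by exists a; split; apply: rt_refl.
- by exists z.
- have [z [z1z z2z]] := cf _ _ _ bz1 bz2.
  by exists z; split; [apply: rt_trans az1 z1z|apply: rt_trans cz2 z2z].
Qed.

Lemma rho_eqM R RS a b ra : complete_for R RS -> cyc_confluent RS ->
  eqM R a b -> is_rho RS a ra -> exists rb, is_rho RS b rb /\ cconj ra rb.
Proof.
move=> [_ cf congrE] cc ab rho_a.
have [z [az bz]] := church_rosser cf (proj2 (congrE a b) ab).
have [rz [rho_z rarz]] := rho_creach cc rho_a (reach_creach az).
by exists rz; split => //; apply: rho_creach_backward (reach_creach bz) rho_z.
Qed.

Lemma congr_cat2 RS p q a b : congr RS a b -> congr RS (p ++ a ++ q) (p ++ b ++ q).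
Proof.
elim=> [x y [p' [q' [l [r [lr [-> ->]]]]]]|x|x y _ yx|x y z _ xy _ yz].
- by apply: rst_step; exists (p ++ p'), (q' ++ q), l, r; rewrite !catA.
- exact: rst_refl.
- exact: rst_sym.
- exact: rst_trans xy yz.
Qed.

Lemma congr_catr RS q a b : congr RS a b -> congr RS (a ++ q) (b ++ q).
Proof. exact: (congr_cat2 [::]). Qed.

Lemma congr_catl RS p a b : congr RS a b -> congr RS (p ++ a) (p ++ b).
Proof. by move=> ab; have := congr_cat2 p [::] ab; rewrite !cats0. Qed.

Lemma equivM_refl R u : equivM R u u.
Proof. by exists [::], [::]; rewrite cats0; split; apply: rst_refl. Qed.

Lemma equivM_sym R u v : equivM R u v -> equivM R v u.
Proof. by move=> [x [y [ux yu]]]; exists y, x; split; apply: rst_sym. Qed.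

Lemma equivM_trans R u v w : equivM R u v -> equivM R v w -> equivM R u w.
Proof.
move=> [x [y [ux yu]]] [x' [y' [vx' y'v]]]; exists (x ++ x'), (y' ++ y); split.
- apply: rst_trans (_ : eqM R _ ((x ++ v) ++ x')) _.
  + by rewrite catA; apply: congr_catr.
  + by rewrite -!catA; apply: congr_catl.
- apply: rst_trans (_ : eqM R _ (y' ++ (v ++ y))) _.
  + by rewrite -catA; apply: congr_catl.
  + by rewrite !catA; apply: congr_catr.
Qed.

Lemma eqM_equivM R u v : eqM R u v -> equivM R u v.
Proof. by move=> uv; exists [::], [::]; rewrite !cats0; split => //; apply: rst_sym. Qed.

Lemma cconj_equivM R u v : cconj u v -> equivM R u v.
Proof. by move=> [a [b [-> ->]]]; exists a, b; rewrite -!catA; split; apply: rst_refl. Qed.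

Lemma creach_equivM R RS u v : complete_for R RS -> creach RS u v -> equivM R u v.
Proof.
move=> [_ _ congrE]; elim=> [x y [x' [xx' st]]|x|x y z _ xy _ yz].
- apply: equivM_trans (cconj_equivM R xx') (eqM_equivM _).
  by apply/congrE; apply: rst_step.
- exact: equivM_refl.
- exact: equivM_trans xy yz.
Qed.

End CyclicRewriting.

Theorem theorem3p3 (Sigma : finType) (R : seq (word Sigma * word Sigma))
    (RS : rules Sigma) :
  complete_for R RS -> cyc_complete RS ->
  forall u v : word Sigma,
    (transposed R u v ->
       forall ru rv, is_rho RS u ru -> is_rho RS v rv -> cconj ru rv) /\
    (forall ru rv, is_rho RS u ru -> is_rho RS v rv -> cconj ru rv ->
       equivM R u v).
Proof.
move=> compl [_ cc] u v; split.
- move=> [x [y [u_xy v_yx]]] ru rv rho_u rho_v.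
  have [r1 [rho_xy c1]] := rho_eqM compl cc u_xy rho_u.
  have [r2 [rho_yx c2]] := rho_cconj (ex_intro _ x (ex_intro _ y (conj erefl erefl))) rho_xy.
  have [r3 [rho_v' c3]] := rho_eqM compl cc (rst_sym _ _ _ _ v_yx) rho_yx.
  apply: cconj_trans (cconj_trans c1 c2) (cconj_trans c3 _).
  exact: rho_unique cc rho_v' rho_v.
- move=> ru rv [u_ru _] [v_rv _] ru_rv.
  apply: equivM_trans (creach_equivM compl u_ru) _.
  apply: equivM_trans (cconj_equivM R ru_rv) _.
  exact: equivM_sym (creach_equivM compl v_rv).
Qed.
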